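(* Let $f$ be a binary NAM on $n$ features, $x\in\mathbb{R}^n$, $\epsilon>0$. Suppose real numbers $\ell_k\le u_k$ ($k\in[n]$) satisfy $\ell_k\le\Delta_k\le u_k$ for every $k$. Let $S\subseteq[n]$ be a sufficient explanation for $(f,x,\epsilon)$, let $i\in S$ and $j\notin S$, and suppose $u_i\le \ell_j$ (in particular, this holds whenever the intervals $[\ell_k,u_k]$ are pairwise non-overlapping and $i$ precedes $j$ in the ascending order of these intervals). Then $(S\setminus\{i\})\cup\{j\}$ is also a sufficient explanation for $(f,x,\epsilon)$.
   Context: A binary neural additive model (NAM) on $n$ features is a map $f:\mathbb{R}^n\to\{0,1\}$, $f(z)=\mathrm{step}\big(\beta_0+\sum_{k=1}^n f_k(z_k)\big)$, where $\beta_0\in\mathbb{R}$, each $f_k:\mathbb{R}\to\mathbb{R}$ is continuous (in the paper, a univariate ReLU neural network), and $\mathrm{step}(t)=1$ if $t\ge 0$ and $\mathrm{step}(t)=0$ otherwise. Fix $x\in\mathbb{R}^n$ and $\epsilon>0$ and let $B=\{\tilde x\in\mathbb{R}^n : |\tilde x_k-x_k|\le\epsilon \text{ for all } k\}$. For $S\subseteq[n]=\{1,\dots,n\}$ and $\tilde x\in\mathbb{R}^n$, $(x_S;\tilde x_{\bar S})$ denotes the vector agreeing with $x$ on the coordinates in $S$ and with $\tilde x$ on $\bar S=[n]\setminus S$. A set $S$ is a sufficient explanation for $(f,x,\epsilon)$ if $f(x_S;\tilde x_{\bar S})=f(x)$ for all $\tilde x\in B$. The importance of feature $k$ is $\Delta_k=f_k(x_k)-\min_{|t-x_k|\le\epsilon}f_k(t)$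 if $f(x)=1$, and $\Delta_k=\max_{|t-x_k|\le\epsilon}f_k(t)-f_k(x_k)$ if $f(x)=0$. *)

From HB Require Import structures.
From mathcomp Require Import all_boot all_order all_algebra.
From mathcomp Require Import all_classical all_reals all_analysis.
Set Implicit Arguments. Unset Strict Implicit. Unset Printing Implicit Defensive.
Import Order.TTheory GRing.Theory Num.Theory.
Import numFieldNormedType.Exports.
Local Open Scope classical_set_scope.
Local Open Scope ring_scope.

(* A binary NAM on n features: bias beta0 and shape functions fk k : R -> R.
   Its output is a bool: true stands for 1, false for 0. *)
Definition nam (R : realType) (n : nat) (beta0 : R) (fk : 'I_n -> R -> R)
  (z : 'I_n -> R) : bool :=
  (0 <= beta0 + \sum_(k < n) fk k (z k)).

Definition mixv (R : realType) (n : nat) (S : {set 'I_n}) (x xt : 'I_n -> R)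
  : 'I_n -> R := fun k => if k \in S then x k else xt k.

Definition in_box (R : realType) (n : nat) (x : 'I_n -> R) (eps : R)
  (xt : 'I_n -> R) : Prop := forall k, `|xt k - x k| <= eps.

Definition sufficient (R : realType) (n : nat) (f : ('I_n -> R) -> bool)
  (x : 'I_n -> R) (eps : R) (S : {set 'I_n}) : Prop :=
  forall xt, in_box x eps xt -> f (mixv S x xt) = f x.

(* Importance Delta_k; for continuous g the inf/sup over the compact interval
   is the min/max. *)
Definition importance (R : realType) (n : nat) (beta0 : R)
  (fk : 'I_n -> R -> R) (x : 'I_n -> R) (eps : R) (k : 'I_n) : R :=
  if nam beta0 fk x then
    fk k (x k) - inf [set fk k t | t in [set t | `|t - x k| <= eps]]
  else
    sup [set fk k t | t in [set t | `|t - x k| <= eps]] - fk k (x k).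

From HB Require Import structures.
From mathcomp Require Import all_boot all_order all_algebra.
From mathcomp Require Import all_classical all_reals all_analysis.
From mathcomp Require Import lra.
Set Implicit Arguments. Unset Strict Implicit. Unset Printing Implicit Defensive.
Import Order.TTheory GRing.Theory Num.Theory.
Import numFieldNormedType.Exports.
Local Open Scope classical_set_scope.
Local Open Scope ring_scope.

(* Put S' = (S \ {i}) u {j} and let c extremise f_j on the ball around x_j
   (a minimiser if f(x) = 1, a maximiser otherwise).  Moving feature j of the
   perturbation to c keeps it in the ball, so by sufficiency of S the score of
   the S-mixture lies on the side of f(x).  The S'-mixture differs from it by
   exactly Delta_j at j and by at most Delta_i at i, and
   Delta_i <= u_i <= l_j <= Delta_j, so the score only moves further away from
   the threshold. *)

Section ExtremaOnClosedBall.
Variable R : realType.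

Lemma sup_eq_max (E : set R) (m : R) : E m -> ubound E m -> sup E = m.
Proof.
move=> Em ubm; apply/eqP; rewrite eq_le ge_sup //=; last by exists m.
by apply: ub_le_sup => //; exists m.
Qed.

Lemma inf_eq_min (E : set R) (m : R) : E m -> lbound E m -> inf E = m.
Proof.
move=> Em lbm; apply/eqP; rewrite eq_le lb_le_inf //= ?andbT; last by exists m.
by apply: ge_inf => //; exists m.
Qed.

Lemma ler_dist_itv (x0 eps t : R) :
  (`|t - x0| <= eps) = (t \in `[x0 - eps, x0 + eps]).
Proof. by rewrite ler_distl in_itv. Qed.

Lemma continuous_min_closed_ball (g : R -> R) (x0 eps : R) :
  continuous g -> 0 <= eps ->
  exists2 c, `|c - x0| <= eps & forall t, `|t - x0| <= eps -> g c <= g t.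
Proof.
move=> cg eps_ge0.
have [|c] := @EVT_min R g (x0 - eps) (x0 + eps) _ (continuous_subspaceT cg); first lra.
by rewrite -ler_dist_itv => cball cmin; exists c => // t; rewrite ler_dist_itv; apply: cmin.
Qed.

Lemma continuous_max_closed_ball (g : R -> R) (x0 eps : R) :
  continuous g -> 0 <= eps ->
  exists2 c, `|c - x0| <= eps & forall t, `|t - x0| <= eps -> g t <= g c.
Proof.
move=> cg eps_ge0.
have [|c] := @EVT_max R g (x0 - eps) (x0 + eps) _ (continuous_subspaceT cg); first lra.
by rewrite -ler_dist_itv => cball cmax; exists c => // t; rewrite ler_dist_itv; apply: cmax.
Qed.

End ExtremaOnClosedBall.

(* For f(x) = 0, Delta_k is the f(x) = 1 formula applied to -f_k; [orient]
   applies that sign. *)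
Definition orient (R : numDomainType) (b : bool) (y : R) : R :=
  if b then y else - y.

Lemma orient_step_stable (R : realDomainType) (b : bool) (A B : R) :
  (0 <= A) = b -> orient b A <= orient b B -> (0 <= B) = b.
Proof.
case: b => /= [A_ge0 leAB | /negbT]; first exact: le_trans leAB.
by rewrite -ltNge lerN2 => A_lt0 leBA; apply/negbTE; rewrite -ltNge (le_lt_trans leBA).
Qed.

Lemma sum_mixv_swap (R : realType) (V : zmodType) (n : nat)
    (F : 'I_n -> R -> V) (x xt : 'I_n -> R) (S : {set 'I_n}) (i j : 'I_n)
    (c : R) :
  i \in S -> j \notin S ->
  \sum_(k < n) F k (mixv ((S :\ i) :|: [set j]) x xt k) =
  \sum_(k < n) F k (mixv S x (fun k => if k == j then c else xt k) k)
  + (F j (x j) - F j c) - (F i (x i) - F i (xt i)).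
Proof.
move=> iS jNS; have neq_ij : i != j by apply: contraNneq jNS => <-.
have termwise k : F k (mixv ((S :\ i) :|: [set j]) x xt k) =
    F k (mixv S x (fun k => if k == j then c else xt k) k)
    + (if k == j then F j (x j) - F j c else 0)
    - (if k == i then F i (x i) - F i (xt i) else 0).
  rewrite /mixv !inE.
  have [->|neq_kj] := eqVneq k j.
    by rewrite orbT eq_sym (negbTE neq_ij) subr0 (negbTE jNS) addrCA subrr addr0.
  have [->|neq_ki] := eqVneq k i; last by rewrite orbF addr0 subr0.
  by rewrite iS /= addr0 opprB addrCA subrr addr0.
rewrite (eq_bigr _ (fun k _ => termwise k)) sumrB big_split /=.
by rewrite -!big_mkcond /= !big_pred1_eq.
Qed.

Lemma importance_extremal (R : realType) (n : nat) (beta0 : R)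
    (fk : 'I_n -> R -> R) (x : 'I_n -> R) (eps : R) (k : 'I_n) :
  continuous (fk k) -> 0 <= eps ->
  let b := nam beta0 fk x in
  exists2 c, `|c - x k| <= eps &
    importance beta0 fk x eps k = orient b (fk k (x k) - fk k c) /\
    forall t, `|t - x k| <= eps ->
      orient b (fk k (x k) - fk k t) <= importance beta0 fk x eps k.
Proof.
move=> fk_cont eps_ge0 b; rewrite /importance -/b /orient.
case: b.
- have [c cball cmin] := continuous_min_closed_ball (x k) fk_cont eps_ge0.
  have -> : inf [set fk k t | t in [set t | `|t - x k| <= eps]] = fk k c.
    by apply: inf_eq_min => [|_ [t tball <-]]; [exists c | exact: cmin].
  by exists c => //; split=> // t /cmin; rewrite lerD2l lerN2.
- have [c cball cmax] := continuous_max_closed_ball (x k) fk_cont eps_ge0.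
  have -> : sup [set fk k t | t in [set t | `|t - x k| <= eps]] = fk k c.
    by apply: sup_eq_max => [|_ [t tball <-]]; [exists c | exact: cmax].
  by exists c; rewrite ?opprB //; split=> // t /cmax; rewrite opprB lerD2r.
Qed.

Theorem proposition1 (R : realType) (n : nat) (beta0 : R)
  (fk : 'I_n -> R -> R) (x : 'I_n -> R) (eps : R)
  (l u : 'I_n -> R) (S : {set 'I_n}) (i j : 'I_n) :
  (forall k, continuous (fk k)) ->
  0 < eps ->
  (forall k, l k <= u k) ->
  (forall k, l k <= importance beta0 fk x eps k <= u k) ->
  sufficient (nam beta0 fk) x eps S ->
  i \in S -> j \notin S ->
  u i <= l j ->
  sufficient (nam beta0 fk) x eps ((S :\ i) :|: [set j]).
Proof.
(* The hypothesis l k <= u k follows from the bounds on Delta_k. *)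
move=> fk_cont /ltW eps_ge0 _ Dbounds suffS iS jNS le_ui_lj xt xt_box.
have [c cball [Dj _]] := importance_extremal beta0 x (fk_cont j) eps_ge0.
have [_ _ [_ Di]] := importance_extremal beta0 x (fk_cont i) eps_ge0.
pose xtj k := if k == j then c else xt k.
have xtj_box : in_box x eps xtj by move=> k; rewrite /xtj; case: eqP => [->|].
apply: orient_step_stable (suffS _ xtj_box) _.
rewrite (sum_mixv_swap fk x xt c iS jNS) -/xtj.
move: (Dbounds i) (Dbounds j) Dj (Di _ (xt_box i)) le_ui_lj.
set Delta := importance beta0 fk x eps; set A := \sum_(k < n) _.
by rewrite /orient; case: (nam _ _ x); lra.
Qed.
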